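(* Let $\Phi:[a,b]\to\mathbb{C}$ be continuous and nowhere zero, let $x_0\in[a,b]$, and let $X^{(k)}=X^{(k)}(x_0,x)$, $\widetilde X^{(k)}=\widetilde X^{(k)}(x_0,x)$ be the $\Phi$-power functions defined below. Then for every finite even $n\ge 2$ and every $x\in[a,b]$, $$\sum_{k=0}^n (-1)^k\binom{n}{k}X^{(k)}(x_0,x)\,\widetilde X^{(n-k)}(x_0,x)=0,$$ equivalently $\widetilde X^{(n)}=\sum_{k=1}^n(-1)^{k+1}\binom{n}{k}X^{(k)}\widetilde X^{(n-k)}$.
   Context: For $x_0,x\in[a,b]$ the $\Phi$-power functions are defined recursively by $X^{(0)}(x_0,x)\equiv 1$, $\widetilde X^{(0)}(x_0,x)\equiv 1$ and, for $n\ge 1$, $$X^{(n)}(x_0,x)=n\int_{x_0}^x X^{(n-1)}(x_0,\xi)\,\big(\Phi(\xi)\big)^{(-1)^n}\,d\xi,\qquad \widetilde X^{(n)}(x_0,x)=n\int_{x_0}^x \widetilde X^{(n-1)}(x_0,\xi)\,\Big(\frac{1}{\Phi(\xi)}\Big)^{(-1)^n}\,d\xi.$$ *)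

From Stdlib Require Import Reals.
From Coquelicot Require Import Coquelicot.
Open Scope R_scope.

(* z^((-1)^n): z if n is even, z^{-1} if n is odd. *)
Definition powm1 (n : nat) (z : C) : C :=
  if Nat.even n then z else Cinv z.

Fixpoint Xpow (Phi : R -> C) (x0 : R) (n : nat) (x : R) : C :=
  match n with
  | O => RtoC 1
  | S m => Cmult (RtoC (INR (S m)))
             (@RInt C_R_CompleteNormedModule (fun xi => Cmult (Xpow Phi x0 m xi) (powm1 (S m) (Phi xi))) x0 x)
  end.

Fixpoint Xtpow (Phi : R -> C) (x0 : R) (n : nat) (x : R) : C :=
  match n with
  | O => RtoC 1
  | S m => Cmult (RtoC (INR (S m)))
             (@RInt C_R_CompleteNormedModule (fun xi => Cmult (Xtpow Phi x0 m xi) (powm1 (S m) (Cinv (Phi xi)))) x0 x)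
  end.

(* Put S(x) = sum_k (-1)^k C(n,k) X^(k)(x) Xt^(n-k)(x).  By construction
   X^(k)' = k X^(k-1) Phi^((-1)^k), and since n is even
   Xt^(n-k)' = (n-k) Xt^(n-k-1) Phi^((-1)^(k+1)).  With (k+1) C(n,k+1) = (n-k) C(n,k)
   the two halves of the product rule for consecutive indices k, k+1 cancel, so S'
   telescopes to 0.  Every term of S contains a power function of positive order,
   which vanishes at x0, hence S = 0.  Only the shape of the recursion matters, so
   the argument is run for arbitrary continuous weights w, v with v_(n-j) = w_(j+1);
   Phi is first extended from [a,b] to R by clamping, so that the fundamental
   theorem of calculus applies up to the endpoints. *)

From Stdlib Require Import Reals Lra Lia.
From Coquelicot Require Import Coquelicot.
Open Scope R_scope.

Section ComplexValued.

Implicit Types (f g : R -> C) (x : R).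

Lemma continuous_C_parts f x :
  continuous f x <->
  continuity_pt (fun t => Re (f t)) x /\ continuity_pt (fun t => Im (f t)) x.
Proof.
  rewrite !continuity_pt_filterlim. split.
  - intros Hf. split; apply (continuous_comp f); auto; destruct (f x);
      [apply continuous_fst | apply continuous_snd].
  - intros [Hre Him].
    apply (continuous_ext (fun t => (Re (f t), Im (f t)))).
    { intros t. destruct (f t); reflexivity. }
    apply (continuous_comp_2 (fun t => Re (f t)) (fun t => Im (f t))
             (fun u v => (u, v) : C_UniformSpace)); auto.
    apply (continuous_ext (fun z => z)); [intros []; reflexivity | apply continuous_id].
Qed.

Lemma continuous_Cmult f g x :
  continuous f x -> continuous g x -> continuous (fun t => f t * g t)%C x.
Proof.
  rewrite !continuous_C_parts. intros [Hf1 Hf2] [Hg1 Hg2]. split; simpl.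
  - apply continuity_pt_minus; apply continuity_pt_mult; assumption.
  - apply continuity_pt_plus; apply continuity_pt_mult; assumption.
Qed.

Lemma continuous_Cinv f x :
  continuous f x -> f x <> RtoC 0 -> continuous (fun t => / f t)%C x.
Proof.
  rewrite !continuous_C_parts. intros [Hre Him] Hnz.
  assert (Hmod : continuity_pt (fun t => Re (f t) ^ 2 + Im (f t) ^ 2) x).
  { apply continuity_pt_plus; apply continuity_pt_mult; try apply continuity_pt_mult;
      auto; apply continuity_pt_const; intros ? ?; reflexivity. }
  assert (Hmod_nz : Re (f x) ^ 2 + Im (f x) ^ 2 <> 0).
  { rewrite <- Cmod2_alt. apply pow_nonzero. intros H. apply Hnz, Cmod_eq_0, H. }
  split; simpl; apply continuity_pt_div; auto.
  apply (continuity_pt_opp (fun t => Im (f t))), Him.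
Qed.

Lemma is_derive_C_parts f x (d : C) :
  is_derive f x d <->
  is_derive (fun t => Re (f t)) x (Re d) /\ is_derive (fun t => Im (f t)) x (Im d).
Proof.
  split.
  - intros Hf. split; eapply filterdiff_ext_lin.
    + apply (filterdiff_comp' (K := R_AbsRing) (V := C_R_NormedModule)
               (W := R_NormedModule) f fst x _ fst Hf).
      apply filterdiff_linear, (is_linear_fst (U := R_NormedModule) (V := R_NormedModule)).
    + reflexivity.
    + apply (filterdiff_comp' (K := R_AbsRing) (V := C_R_NormedModule)
               (W := R_NormedModule) f snd x _ snd Hf).
      apply filterdiff_linear, (is_linear_snd (U := R_NormedModule) (V := R_NormedModule)).
    + reflexivity.
  - intros [Hre Him].
    apply (filterdiff_ext (fun t => (Re (f t), Im (f t)))).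
    { intros t. destruct (f t); reflexivity. }
    eapply filterdiff_ext_lin.
    + apply (filterdiff_comp'_2 (K := R_AbsRing) (U := R_NormedModule)
               (V := R_NormedModule) (W := C_R_NormedModule)
               _ _ (fun u v => (u, v)) x _ _ (fun u v => (u, v)) Hre Him).
      apply (filterdiff_ext_lin _ (fun z => z)).
      * apply (filterdiff_ext (fun z => z)); [intros []; reflexivity | apply filterdiff_id].
      * intros []; reflexivity.
    + intros y. reflexivity.
Qed.

Lemma is_derive_Cmult f g x (df dg : C) :
  is_derive f x df -> is_derive g x dg ->
  is_derive (fun t => f t * g t)%C x (df * g x + f x * dg)%C.
Proof.
  rewrite !is_derive_C_parts, !is_derive_Reals. intros [Hf1 Hf2] [Hg1 Hg2]. split.
  - change (derivable_pt_lim ((fun t => Re (f t)) * (fun t => Re (g t))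
              - (fun t => Im (f t)) * (fun t => Im (g t)))%F x (Re (df * g x + f x * dg))).
    rewrite re_plus, !re_mult.
    replace (Re df * Re (g x) - Im df * Im (g x) + (Re (f x) * Re dg - Im (f x) * Im dg))
      with ((Re df * Re (g x) + Re (f x) * Re dg) - (Im df * Im (g x) + Im (f x) * Im dg))
      by ring.
    apply derivable_pt_lim_minus; apply derivable_pt_lim_mult; assumption.
  - change (derivable_pt_lim ((fun t => Re (f t)) * (fun t => Im (g t))
              + (fun t => Im (f t)) * (fun t => Re (g t)))%F x (Im (df * g x + f x * dg))).
    rewrite im_plus, !im_mult.
    replace (Re df * Im (g x) + Im df * Re (g x) + (Re (f x) * Im dg + Im (f x) * Re dg))
      with ((Re df * Im (g x) + Re (f x) * Im dg) + (Im df * Re (g x) + Im (f x) * Re dg))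
      by ring.
    apply derivable_pt_lim_plus; apply derivable_pt_lim_mult; assumption.
Qed.

End ComplexValued.

Lemma is_derive_zero_eq {V : CompleteNormedModule R_AbsRing} (f : R -> V) a b :
  (forall t, is_derive f t zero) -> f b = f a.
Proof.
  intros Hf.
  assert (Hftc := is_RInt_derive f (fun _ => zero) a b
                    (fun t _ => Hf t) (fun t _ => continuous_const _ t)).
  assert (Hconst := is_RInt_const a b (zero : V)).
  rewrite (scal_zero_r (K := R_Ring) (V := V)) in Hconst.
  apply is_RInt_unique in Hftc, Hconst.
  apply (plus_reg_r (opp (f a))).
  change (minus (f b) (f a) = minus (f a) (f a)).
  rewrite minus_eq_zero, <- Hftc. exact Hconst.
Qed.

Lemma sum_n_telescoping {G : AbelianGroup} (A B : nat -> G) n :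
  (forall j, (j < n)%nat -> A (S j) = opp (B j)) ->
  sum_n (fun k => plus (A k) (B k)) n = plus (A O) (B n).
Proof.
  induction n as [|n IH]; intros HAB; [apply sum_O|].
  rewrite sum_Sn, IH by auto. rewrite (HAB n) by lia.
  rewrite <- !plus_assoc, (plus_assoc (B n)), plus_opp_r, plus_zero_l. reflexivity.
Qed.

Lemma signed_binomial_succ n j : (j < n)%nat ->
  (-1) ^ S j * Binomial.C n (S j) * INR (S j) = - ((-1) ^ j * Binomial.C n j * INR (n - j)).
Proof.
  intros Hj. rewrite pascal_step3 by exact Hj. simpl pow.
  field. apply not_0_INR. lia.
Qed.

Definition clamp (a b t : R) : R := Rmax a (Rmin b t).

Section Clamp.

Variables (a b : R).
Hypothesis Hab : a <= b.

Lemma clamp_in t : a <= clamp a b t <= b.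
Proof. unfold clamp, Rmax, Rmin; repeat destruct Rle_dec; lra. Qed.

Lemma clamp_id t : a <= t <= b -> clamp a b t = t.
Proof. unfold clamp, Rmax, Rmin; repeat destruct Rle_dec; lra. Qed.

Lemma clamp_lipschitz s t : Rabs (clamp a b s - clamp a b t) <= Rabs (s - t).
Proof.
  unfold clamp, Rmax, Rmin, Rabs; repeat destruct Rle_dec; repeat destruct Rcase_abs; lra.
Qed.

Lemma filterlim_clamp t :
  filterlim (clamp a b) (locally t) (within (fun s => a <= s <= b) (locally (clamp a b t))).
Proof.
  intros P [eps HP]. exists eps. intros s Hs. apply HP; [|apply clamp_in].
  apply (Rle_lt_trans _ _ _ (clamp_lipschitz s t)), Hs.
Qed.

Lemma continuous_comp_clamp {V : UniformSpace} (f : R -> V) :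
  (forall y, a <= y <= b ->
     filterlim f (within (fun s => a <= s <= b) (locally y)) (locally (f y))) ->
  forall t, continuous (fun s => f (clamp a b s)) t.
Proof.
  intros Hf t. eapply filterlim_comp; [apply filterlim_clamp | apply Hf, clamp_in].
Qed.

End Clamp.

Section WeightedPowers.

Variables (w : nat -> R -> C) (x0 : R).

Fixpoint wpow (n : nat) (x : R) : C :=
  match n with
  | O => RtoC 1
  | S m => Cmult (RtoC (INR (S m)))
             (@RInt C_R_CompleteNormedModule (fun xi => Cmult (wpow m xi) (w (S m) xi)) x0 x)
  end.

Lemma wpow_base m : wpow (S m) x0 = RtoC 0.
Proof.
  simpl wpow. rewrite RInt_point. exact (Cmult_0_r _).
Qed.

Hypothesis w_cont : forall m t, continuous (w m) t.

Lemma is_derive_wpow_S m :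
  (forall t, continuous (wpow m) t) ->
  forall t, is_derive (wpow (S m)) t (INR (S m) * (wpow m t * w (S m) t))%C.
Proof.
  intros Hm t.
  set (F := fun s => (wpow m s * w (S m) s)%C).
  assert (HF : forall s, continuous F s) by (intros s; apply continuous_Cmult; auto).
  assert (HI : is_derive (fun s => @RInt C_R_CompleteNormedModule F x0 s) t (F t)).
  { apply is_derive_RInt with x0; [|apply HF].
    apply filter_forall. intros s. apply (RInt_correct (V := C_R_CompleteNormedModule)).
    apply ex_RInt_continuous. intros; apply HF. }
  assert (H := is_derive_Cmult _ _ t _ _
                 (is_derive_const (K := R_AbsRing) (V := C_R_NormedModule) (RtoC (INR (S m))) t) HI).
  cbv beta in H.
  replace (RtoC 0 * _ + _)%C with (RtoC (INR (S m)) * F t)%C in H by ring.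
  exact H.
Qed.

Lemma continuous_wpow m t : continuous (wpow m) t.
Proof.
  revert t. induction m as [|m IH]; intros t.
  - apply continuous_const.
  - apply (filterdiff_continuous (K := R_AbsRing) (U := R_NormedModule) (V := C_R_NormedModule)).
    eexists. apply is_derive_wpow_S, IH.
Qed.

(* With truncated [m - 1], the case [m = 0] is the derivative 0 of the constant 1. *)
Lemma is_derive_wpow m t :
  is_derive (wpow m) t (INR m * (wpow (m - 1) t * w m t))%C.
Proof.
  destruct m as [|m].
  - replace (RtoC (INR 0) * _)%C with (zero : C).
    + apply (is_derive_const (K := R_AbsRing) (V := C_R_NormedModule)).
    + change (RtoC 0 = RtoC 0 * (wpow 0 t * w 0%nat t))%C. ring.
  - rewrite Nat.sub_succ, Nat.sub_0_r. apply is_derive_wpow_S, continuous_wpow.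
Qed.

End WeightedPowers.

Lemma wpow_ext_in (w w' : nat -> R -> C) x0 a b :
  a <= x0 <= b -> (forall m t, a <= t <= b -> w m t = w' m t) ->
  forall n x, a <= x <= b -> wpow w x0 n x = wpow w' x0 n x.
Proof.
  intros Hx0 Hw n. induction n as [|n IH]; intros x Hx; [reflexivity|].
  simpl wpow. f_equal. apply RInt_ext. intros t Ht.
  assert (a <= t <= b) by (unfold Rmin, Rmax in Ht; destruct Rle_dec; lra).
  rewrite IH, Hw by assumption. reflexivity.
Qed.

Lemma Xpow_wpow Phi x0 n x :
  Xpow Phi x0 n x = wpow (fun m t => powm1 m (Phi t)) x0 n x.
Proof.
  revert x. induction n as [|n IH]; intros x; [reflexivity|].
  simpl. f_equal. apply RInt_ext. intros t _. rewrite IH. reflexivity.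
Qed.

Lemma Xtpow_wpow Phi x0 n x :
  Xtpow Phi x0 n x = wpow (fun m t => powm1 m (/ Phi t)%C) x0 n x.
Proof.
  revert x. induction n as [|n IH]; intros x; [reflexivity|].
  simpl. f_equal. apply RInt_ext. intros t _. rewrite IH. reflexivity.
Qed.

Lemma Cinv_neq_0 (z : C) : z <> RtoC 0 -> (/ z)%C <> RtoC 0.
Proof.
  intros Hz H0. apply C1_nz. rewrite <- (Cinv_l z Hz), H0. apply Cmult_0_l.
Qed.

Lemma continuous_powm1 (f : R -> C) m t :
  continuous f t -> f t <> RtoC 0 -> continuous (fun s => powm1 m (f s)) t.
Proof.
  unfold powm1. destruct (Nat.even m); [auto | apply continuous_Cinv].
Qed.

Lemma powm1_sub_Cinv n j (z : C) : Nat.even n = true -> (j <= n)%nat -> z <> RtoC 0 ->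
  powm1 (n - j) (/ z)%C = powm1 (S j) z.
Proof.
  intros Hn Hj Hz. unfold powm1.
  rewrite Nat.even_sub, Hn, Nat.even_succ, <- Nat.negb_even by exact Hj.
  destruct (Nat.even j); simpl; [reflexivity | field; exact Hz].
Qed.

Definition alt_binom (n k : nat) : R := (-1) ^ k * Binomial.C n k.

Section BinomialConvolution.

Variables (w v : nat -> R -> C) (x0 : R) (n : nat).
Hypotheses (w_cont : forall m t, continuous (w m) t) (v_cont : forall m t, continuous (v m) t).
Hypothesis n_pos : (1 <= n)%nat.
Hypothesis weights_compl : forall j t, (j < n)%nat -> v (n - j)%nat t = w (S j) t.

Definition binom_conv (x : R) : C :=
  sum_n (fun k => (RtoC (alt_binom n k) * (wpow w x0 k x * wpow v x0 (n - k) x))%C) n.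

Lemma is_derive_binom_conv t : is_derive binom_conv t zero.
Proof.
  set (A k := (RtoC (alt_binom n k * INR k)
               * (wpow w x0 (k - 1) t * w k t) * wpow v x0 (n - k) t)%C).
  set (B k := (RtoC (alt_binom n k * INR (n - k))
               * wpow w x0 k t * (wpow v x0 (n - k - 1) t * v (n - k)%nat t))%C).
  assert (HAB : forall j, (j < n)%nat -> A (S j) = opp (B j)).
  { intros j Hj. unfold A, B, alt_binom.
    rewrite signed_binomial_succ, Nat.sub_succ, Nat.sub_0_r, weights_compl by exact Hj.
    replace (n - S j)%nat with (n - j - 1)%nat by lia.
    rewrite RtoC_opp. change (opp ?z) with (Copp z). ring. }
  assert (Hterm : forall k, is_derive
      (fun s => RtoC (alt_binom n k) * (wpow w x0 k s * wpow v x0 (n - k) s))%C t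
      (plus (A k) (B k))).
  { intros k.
    assert (H := is_derive_Cmult _ _ t _ _
                   (is_derive_const (K := R_AbsRing) (V := C_R_NormedModule) (RtoC (alt_binom n k)) t)
                   (is_derive_Cmult _ _ t _ _ (is_derive_wpow w x0 w_cont k t)
                                              (is_derive_wpow v x0 v_cont (n - k) t))).
    replace (RtoC 0 * _ + _)%C with (Cplus (A k) (B k)) in H; [exact H|].
    unfold A, B. rewrite !RtoC_mult. ring. }
  assert (Hval : sum_n (fun k => plus (A k) (B k)) n = zero).
  { rewrite (sum_n_telescoping (G := C_AbelianGroup)) by exact HAB.
    unfold A, B. rewrite Nat.sub_diag. simpl INR. rewrite !Rmult_0_r.
    rewrite !Cmult_0_l. exact (Cplus_0_l (RtoC 0)). }
  (* [rewrite] cannot see through the two convertible instances of [zero] here. *)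
  exact (eq_ind _ (is_derive binom_conv t) (is_derive_sum_n _ n t _ (fun k _ => Hterm k)) _ Hval).
Qed.

Lemma binom_conv_base : binom_conv x0 = RtoC 0.
Proof.
  unfold binom_conv. rewrite (sum_n_ext_loc _ (fun _ => zero)).
  - exact (sum_n_m_const_zero (G := C_AbelianMonoid) 0 n).
  - intros [|k] _.
    + destruct n as [|m]; [lia|]. rewrite Nat.sub_0_r, wpow_base.
      rewrite !Cmult_0_r. reflexivity.
    + rewrite wpow_base, Cmult_0_l, Cmult_0_r. reflexivity.
Qed.

Theorem binom_conv_eq_0 x : binom_conv x = RtoC 0.
Proof.
  rewrite <- binom_conv_base.
  apply (is_derive_zero_eq (V := C_R_CompleteNormedModule)), is_derive_binom_conv.
Qed.

End BinomialConvolution.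

Theorem theorem3 (a b : R) (Phi : R -> C)
  (Hcont : forall y, a <= y <= b ->
     filterlim Phi (within (fun t => a <= t <= b) (locally y)) (locally (Phi y)))
  (Hnz : forall y, a <= y <= b -> Phi y <> RtoC 0)
  (x0 : R) (Hx0 : a <= x0 <= b)
  (n : nat) (Hn2 : (2 <= n)%nat) (Hev : Nat.even n = true)
  (x : R) (Hx : a <= x <= b) :
  sum_n (fun k => Cmult (RtoC ((-1) ^ k * Binomial.C n k))
                        (Cmult (Xpow Phi x0 k x) (Xtpow Phi x0 (n - k) x))) n
  = RtoC 0.
Proof.
  assert (Hab : a <= b) by lra.
  set (Ph := fun s => Phi (clamp a b s)).
  assert (Ph_cont : forall t, continuous Ph t) by exact (continuous_comp_clamp a b Hab Phi Hcont).
  assert (Ph_nz : forall t, Ph t <> RtoC 0) by (intros t; apply Hnz, clamp_in, Hab).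
  assert (Ph_eq : forall t, a <= t <= b -> Phi t = Ph t)
    by (intros t Ht; unfold Ph; rewrite clamp_id; auto).
  set (w := fun m t => powm1 m (Ph t)).
  set (v := fun m t => powm1 m (/ Ph t)%C).
  assert (Hw : forall m t, a <= t <= b -> powm1 m (Phi t) = w m t)
    by (intros m t Ht; unfold w; rewrite Ph_eq; auto).
  assert (Hv : forall m t, a <= t <= b -> powm1 m (/ Phi t)%C = v m t)
    by (intros m t Ht; unfold v; rewrite Ph_eq; auto).
  transitivity (binom_conv w v x0 n x).
  - apply sum_n_ext. intros k.
    rewrite Xpow_wpow, Xtpow_wpow, (wpow_ext_in _ w x0 a b Hx0 Hw k x Hx),
      (wpow_ext_in _ v x0 a b Hx0 Hv (n - k) x Hx).
    reflexivity.
  - apply binom_conv_eq_0; [intros m t.. | lia |].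
    + apply continuous_powm1; auto.
    + apply continuous_powm1; [apply continuous_Cinv | apply Cinv_neq_0]; auto.
    + intros j t Hj. apply powm1_sub_Cinv; auto; lia.
Qed.
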